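(* Let $a\geq 1$ and $b\geq 2$ be integers. Let $x\in\Lambda^{a+b}$ have coordinates that are linearly independent over $\mathbb{Q}$, and suppose that $T_{a,b}^k(x)\not\to(0,\ldots,0)$ as $k\to\infty$. Then there exists $k\geq 1$ such that $T_{a,b}^k(x)\in A$.
   Context: For $n\geq 1$ let $\Lambda^n=\{x\in\mathbb{R}^n : 0\leq x_1\leq\cdots\leq x_n\}$. For integers $a,b\geq 1$ the map $T_{a,b}:\Lambda^{a+b}\to\Lambda^{a+b}$ sends $x$ to the vector obtained by arranging $x_1,\ldots,x_a,\,x_{a+1}-x_a,\ldots,x_{a+b}-x_a$ in nondecreasing order. $A=\{x\in\Lambda^{a+b}: x_1+\cdots+x_{a+b}\leq b\,x_{a+b}\}$. *)

From HB Require Import structures.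
From mathcomp Require Import all_boot all_order all_algebra.
From mathcomp Require Import all_classical all_reals all_analysis.
Set Implicit Arguments. Unset Strict Implicit. Unset Printing Implicit Defensive.
Import Order.TTheory GRing.Theory Num.Theory.
Local Open Scope ring_scope.

(* Coordinates x_1,...,x_n are stored as x`_0,...,x`_(n-1). *)

Definition Lambda {R : realType} (n : nat) (x : seq R) : Prop :=
  size x = n /\ (forall i : nat, (i < n)%N -> 0 <= x`_i) /\ sorted <=%R x.

Definition T {R : realType} (a b : nat) (x : seq R) : seq R :=
  sort <=%R (take a x ++ [seq y - x`_(a.-1) | y <- take b (drop a x)]).

Definition inA {R : realType} (a b : nat) (x : seq R) : Prop :=
  \sum_(i < a + b) x`_i <= b%:R * x`_((a + b).-1).

Definition Q_lin_indep {R : realType} (n : nat) (x : seq R) : Prop :=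
  forall q : 'I_n -> rat,
    \sum_(i < n) ratr (q i) * x`_i = 0 -> forall i, q i = 0.

(* The sum of the coordinates drops by b x_a at every step and stays nonnegative, so the pivot
   x_a cannot stay bounded away from 0.  The largest coordinate never increases; if it stayed
   above some e > 0, then once the pivot is below e/(a+2), staying outside A forces
   x_{a+1} > 2 x_a, so T leaves the pivot unchanged, and it stays unchanged forever --
   contradicting the drop of the sum. *)
From HB Require Import structures.
From mathcomp Require Import all_boot all_order all_algebra.
From mathcomp Require Import all_classical all_reals all_analysis.
From mathcomp Require Import lra zify.
Import Order.TTheory GRing.Theory Num.Theory numFieldNormedType.Exports.
Local Open Scope classical_set_scope.
Local Open Scope ring_scope.

Lemma no_uniform_descent (R : realType) (S : nat -> R) (c : R) (K : nat) :
  0 < c -> (forall k, 0 <= S k) -> (forall k, (K <= k)%N -> S k.+1 <= S k - c) -> False.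
Proof.
move=> c_gt0 S_ge0 S_desc.
have S_le n : S (K + n)%N <= S K - n%:R * c.
  elim: n => [|n IHn]; first by rewrite addn0 mul0r subr0.
  rewrite addnS -natr1 mulrDl mul1r.
  have := S_desc (K + n)%N (leq_addr _ _); lra.
set n := Num.Def.archi_bound (S K / c).
have : S K / c < n%:R by apply: archi_boundP; rewrite divr_ge0 // ltW.
rewrite ltr_pdivrMr // => Sn.
have := S_le n; have := S_ge0 (K + n)%N; lra.
Qed.

Lemma sum_le_size_mul (R : numDomainType) (s : seq R) (c : R) :
  (forall v, v \in s -> v <= c) -> \sum_(v <- s) v <= (size s)%:R * c.
Proof.
move=> s_le; rewrite -sum1_size natr_sum mulr_suml big_seq [X in _ <= X]big_seq.
by apply: ler_sum => v /s_le; rewrite mul1r.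
Qed.

Lemma sumr_const_seq (V : nmodType) (I : Type) (s : seq I) (x : V) :
  \sum_(i <- s) x = x *+ size s.
Proof. by rewrite big_const_seq count_predT -Monoid.iteropE. Qed.

Section Lambda.
Context {R : realType} {n : nat} {y : seq R}.
Hypothesis yL : Lambda n y.

Lemma Lambda_ge0 i : (i < n)%N -> 0 <= y`_i.
Proof. by case: yL => _ [y_ge0 _]; exact: y_ge0. Qed.

Lemma Lambda_nondecr i j : (i <= j)%N -> (j < n)%N -> y`_i <= y`_j.
Proof.
case: yL => y_size [_ y_sorted] le_ij lt_jn.
apply: (sorted_leq_nth le_trans lexx 0 y_sorted) => //; rewrite inE y_size //.
exact: leq_ltn_trans le_ij lt_jn.
Qed.

Lemma Lambda_mem_ge0 v : v \in y -> 0 <= v.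
Proof.
case: yL => y_size _ /(nthP 0)[i lt_i <-]; apply: Lambda_ge0.
by rewrite -y_size.
Qed.

End Lambda.

Section OneStep.
Context {R : realType} {a b : nat}.
Hypotheses (a_gt0 : (0 < a)%N) (b_gt0 : (0 < b)%N).

Lemma T_perm (y : seq R) :
  perm_eq (T a b y) (take a y ++ [seq w - y`_a.-1 | w <- take b (drop a y)]).
Proof. by rewrite perm_sort. Qed.

Lemma size_take_parts {y : seq R} : size y = (a + b)%N ->
  size (take a y) = a /\ size (take b (drop a y)) = b.
Proof.
move=> y_size; split; apply: size_takel; first by rewrite y_size leq_addr.
by rewrite size_drop y_size addKn.
Qed.

Lemma size_T {y : seq R} : size y = (a + b)%N -> size (T a b y) = (a + b)%N.
Proof.
move=> /size_take_parts[s1 s2].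
by rewrite (perm_size (T_perm y)) size_cat size_map s1 s2.
Qed.

Context {y : seq R}.
Hypothesis yL : Lambda (a + b) y.

Lemma mem_take_Lambda v : v \in take a y -> 0 <= v /\ v <= y`_a.-1.
Proof.
have [y_size _] := yL; have [s1 _] := size_take_parts y_size.
move=> /(nthP 0)[i]; rewrite s1 => lt_ia <-; rewrite nth_take //.
split; first by apply: (Lambda_ge0 yL); lia.
by apply: (Lambda_nondecr yL); lia.
Qed.

Lemma mem_take_drop_Lambda w : w \in take b (drop a y) -> y`_a <= w /\ w <= y`_(a + b).-1.
Proof.
have [y_size _] := yL; have [_ s2] := size_take_parts y_size.
move=> /(nthP 0)[j]; rewrite s2 => lt_jb <-; rewrite nth_take // nth_drop.
by split; apply: (Lambda_nondecr yL); lia.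
Qed.

Lemma mem_T_Lambda v : v \in T a b y -> 0 <= v /\ v <= y`_(a + b).-1.
Proof.
rewrite (perm_mem (T_perm y)) mem_cat => /orP[/mem_take_Lambda[v_ge0 v_le]|].
  by split=> //; apply: le_trans v_le _; apply: (Lambda_nondecr yL); lia.
case/mapP=> w /mem_take_drop_Lambda[w_ge w_le] ->.
have piv_le : y`_a.-1 <= y`_a by apply: (Lambda_nondecr yL); lia.
have piv_ge0 : 0 <= y`_a.-1 by apply: (Lambda_ge0 yL); lia.
split; lra.
Qed.

Lemma Lambda_T : Lambda (a + b) (T a b y).
Proof.
have [y_size _] := yL.
split; first exact: size_T.
split; last by apply: sort_sorted => u v; exact: le_total.
move=> i lt_i; have /mem_T_Lambda[] // : (T a b y)`_i \in T a b y.
by rewrite mem_nth // size_T.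
Qed.

Lemma T_top_le : (T a b y)`_(a + b).-1 <= y`_(a + b).-1.
Proof.
have [y_size _] := yL.
have /mem_T_Lambda[] // : (T a b y)`_(a + b).-1 \in T a b y.
by rewrite mem_nth // size_T //; lia.
Qed.

Lemma sum_T : \sum_(v <- T a b y) v = \sum_(v <- y) v - b%:R * y`_a.-1.
Proof.
have [y_size _] := yL; have [_ s2] := size_take_parts y_size.
rewrite (perm_big _ (T_perm y)) big_cat /= big_map sumrB sumr_const_seq s2 mulr_natl.
rewrite addrA -big_cat /= [take b _]take_oversize ?cat_take_drop //.
by rewrite size_drop y_size addKn.
Qed.

Lemma T_pivot_fixed : 2%:R * y`_a.-1 <= y`_a -> (T a b y)`_a.-1 = y`_a.-1.
Proof.
move=> gap; have [y_size [_ y_sorted]] := yL; have [s1 _] := size_take_parts y_size.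
suff -> : T a b y = take a y ++ [seq w - y`_a.-1 | w <- take b (drop a y)].
  by rewrite nth_cat s1 ltn_predL a_gt0 nth_take // ltn_predL.
rewrite /T sorted_sort //; first exact: le_trans.
rewrite sorted_pairwise ?pairwise_cat -?sorted_pairwise; try exact: le_trans.
apply/and3P; split.
- apply/allrelP => u _ /mem_take_Lambda[_ u_le] /mapP[w /mem_take_drop_Lambda[w_ge _] ->].
  lra.
- exact/take_sorted.
- rewrite sorted_map; apply: sub_sorted (take_sorted _ (drop_sorted _ y_sorted)).
  by move=> u v /=; rewrite lerD2r.
Qed.

Lemma notin_A_gap : ~ inA a b y ->
  0 < y`_a.-1 /\ y`_(a + b).-1 - a%:R * y`_a.-1 < y`_a.
Proof.
move=> notA; have [y_size _] := yL; have [s1 _] := size_take_parts y_size.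
have lt_ay : (a < size y)%N by lia.
set top := y`_(a + b).-1; set piv := y`_a.-1.
have split_sum : \sum_(i < a + b) y`_i
    = \sum_(v <- take a y) v + (y`_a + \sum_(v <- drop a.+1 y) v).
  rewrite -y_size -(big_mkord xpredT (fun i => y`_i)) -(big_nth 0 xpredT id).
  by rewrite -{1}(cat_take_drop a y) big_cat /= (drop_nth 0 lt_ay) big_cons.
have head_le : \sum_(v <- take a y) v <= a%:R * piv.
  by rewrite -{2}s1; apply: sum_le_size_mul => v /mem_take_Lambda[].
have rest_le : \sum_(v <- drop a.+1 y) v <= (b.-1)%:R * top.
  have -> : b.-1 = size (drop a.+1 y) by rewrite size_drop y_size; lia.
  apply: sum_le_size_mul => v /(nthP 0)[j]; rewrite size_drop y_size => lt_j <-.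
  by rewrite nth_drop; apply: (Lambda_nondecr yL); lia.
have ya_le : y`_a <= top by apply: (Lambda_nondecr yL); lia.
have lt_sum : b%:R * top < \sum_(i < a + b) y`_i by rewrite ltNge; apply/negP.
rewrite split_sum -(prednK b_gt0) -natr1 mulrDl mul1r in lt_sum.
have a_pos : 0 < a%:R :> R by rewrite ltr0n.
have : 0 < a%:R * piv by lra.
rewrite pmulr_rgt0 // => piv_gt0; split=> //; lra.
Qed.

End OneStep.

Section Orbit.
Variables (R : realType) (a b : nat) (x : seq R).
Hypotheses (a_gt0 : (0 < a)%N) (b_gt0 : (0 < b)%N) (xL : Lambda (a + b) x).
Hypothesis orbit_avoids_A : forall k, (0 < k)%N -> ~ inA a b (iter k (T a b) x).

Let orbit k := iter k (T a b) x.
Let pivot k := (orbit k)`_a.-1.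
Let top k := (orbit k)`_(a + b).-1.

Lemma Lambda_orbit k : Lambda (a + b) (orbit k).
Proof. by elim: k => [|k IHk] //; apply: Lambda_T. Qed.

Lemma top_orbit_nonincr k n : (k <= n)%N -> top n <= top k.
Proof.
move=> /subnK <-; elim: (n - k)%N => [|m IHm] //.
by rewrite addSn; apply: le_trans IHm; apply: T_top_le (Lambda_orbit _).
Qed.

Lemma pivot_orbit_not_eventually_ge c K : 0 < c -> ~ (forall k, (K <= k)%N -> c <= pivot k).
Proof.
move=> c_gt0 pivot_ge.
apply: (@no_uniform_descent R (fun k => \sum_(v <- orbit k) v) c K c_gt0).
  move=> k; rewrite big_seq; apply: sumr_ge0 => v.
  exact: (Lambda_mem_ge0 (Lambda_orbit k)).
move=> k le_Kk; rewrite [orbit k.+1]/= sum_T //; last exact: Lambda_orbit.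
have := pivot_ge k le_Kk; have : 1 <= b%:R :> R by rewrite ler1n.
rewrite -/(pivot k); nra.
Qed.

Lemma pivot_orbit_frozen e K : (0 < K)%N -> (forall k, e <= top k) ->
  (a + 2)%:R * pivot K < e -> forall n, pivot (K + n) = pivot K.
Proof.
move=> K_gt0 top_ge small_pivot; elim=> [|n IHn]; first by rewrite addn0.
rewrite addnS -IHn {1}/pivot [orbit _.+1]/= (T_pivot_fixed a_gt0 b_gt0 (Lambda_orbit _)) //.
have [_ gap] := notin_A_gap a_gt0 b_gt0 (Lambda_orbit (K + n))
  (orbit_avoids_A _ (ltn_addr n K_gt0)).
move: gap (top_ge (K + n)%N) small_pivot.
rewrite -/(pivot _) -/(top _) -IHn natrD mulrDl; lra.
Qed.

Lemma top_orbit_small e : 0 < e -> exists k, top k < e.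
Proof.
move=> e_gt0; apply: contrapT => no_small.
have top_ge k : e <= top k by rewrite leNgt; apply/negP => ?; apply: no_small; exists k.
have den_gt0 : 0 < (a + 2)%:R :> R by rewrite ltr0n addn_gt0 a_gt0.
have [K [K_gt0 small_pivot]] : exists K, (0 < K)%N /\ (a + 2)%:R * pivot K < e.
  apply: contrapT => no_K; apply: (@pivot_orbit_not_eventually_ge (e / (a + 2)%:R) 1%N).
    exact: divr_gt0.
  move=> k k_gt0; rewrite ler_pdivrMr // mulrC leNgt; apply/negP => ?.
  by apply: no_K; exists k.
have [pivot_gt0 _] := notin_A_gap a_gt0 b_gt0 (Lambda_orbit K) (orbit_avoids_A _ K_gt0).
apply: (@pivot_orbit_not_eventually_ge _ K pivot_gt0) => k /subnK <-.
by rewrite addnC (pivot_orbit_frozen _ _ K_gt0 top_ge small_pivot).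
Qed.

Lemma orbit_cvg0 i : (i < a + b)%N -> (fun k => (orbit k)`_i) @ \oo --> (0 : R).
Proof.
move=> lt_i; apply/cvgrPdist_lt => e e_gt0.
have [k top_k] := top_orbit_small _ e_gt0.
exists k => // n /= le_kn.
rewrite sub0r normrN ger0_norm; last exact: Lambda_ge0 (Lambda_orbit n) _ lt_i.
apply: le_lt_trans top_k; apply: le_trans (top_orbit_nonincr _ _ le_kn).
by apply: (Lambda_nondecr (Lambda_orbit n)); lia.
Qed.

End Orbit.

Theorem proposition4p6 (R : realType) (a b : nat) (ha : (1 <= a)%N) (hb : (2 <= b)%N)
  (x : seq R) (hx : Lambda (a + b) x) (hind : Q_lin_indep (a + b) x)
  (hnc : ~ (forall i : nat, (i < a + b)%N ->
            (fun k : nat => (iter k (T a b) x)`_i) @ \oo --> (0 : R))) :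
  exists k : nat, (1 <= k)%N /\ inA a b (iter k (T a b) x).
Proof.
apply: contrapT => never_in_A; apply: hnc.
apply: orbit_cvg0 => // [|k k_gt0 inA_k]; first exact: leq_trans hb.
by apply: never_in_A; exists k.
Qed.
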